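(* In the setting described in the context, let $\hat{\mathcal P}\subseteq\mathcal P_\Pi$ and $\hat{\mathcal R}\subseteq\mathcal R_\Pi$. Define problem MP1: minimize $c_1x+\eta$ over $x\in\mathcal X$, $\eta$, $u^\pi$ ($\pi\in\hat{\mathcal P}$), $v^\gamma$ ($\gamma\in\hat{\mathcal R}$) subject to $\eta\ge\pi^\intercal d-\pi^\intercal B_1x-\pi^\intercal Eu^\pi$ and $u^\pi\in\mathcal{OU}(x,\pi)$ for all $\pi\in\hat{\mathcal P}$, and $\gamma^\intercal d-\gamma^\intercal B_1x-\gamma^\intercal Ev^\gamma\le 0$ and $v^\gamma\in\mathcal{OU}(x,\gamma)$ for all $\gamma\in\hat{\mathcal R}$. Define problem MP2: minimize $c_1x+\eta$ over $x\in\mathcal X$, $\eta$, $u^\pi,y^\pi$ ($\pi\in\hat{\mathcal P}$), $v^\gamma,y^\gamma$ ($\gamma\in\hat{\mathcal R}$) subject to $\eta\ge c_2y^\pi$, $B_2y^\pi\ge d-B_1x-Eu^\pi$, $y^\pi\ge0$, $u^\pi\in\mathcal{OU}(x,\pi)$ for all $\pi\in\hat{\mathcal P}$, and $B_2y^\gamma\ge d-B_1x-Ev^\gamma$, $y^\gamma\ge 0$, $v^\gamma\in\mathcal{OU}(x,\gamma)$ for all $\gamma\in\hat{\mathcal R}$. Then the optimal value of MP1 is less than or equal to the optimal value of MP2.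
   Context: $\mathcal X=\{x\in\mathbb Z^{m_x}_+\times\mathbb R^{n_x}_+: Ax\ge b\}$, $\mathcal U(x)=\{u\in\mathbb R^{n_u}_+: F(x)u\le h+Gx\}$ with $F(x)$ a matrix depending on $x$. $\Pi=\{\pi\ge 0: B_2^\intercal\pi\le c_2^\intercal\}$, with finite sets of extreme points $\mathcal P_\Pi$ and extreme rays $\mathcal R_\Pi$. For a vector $\beta$, $\mathcal{OU}(x,\beta)$ is the set of optimal solutions of the linear program $\max\{(-Eu)^\intercal\beta: u\in\mathcal U(x)\}$. The optimal value of an infeasible minimization problem is $+\infty$. Standing assumptions: $\mathcal U(x)$ is nonempty and bounded for all $x\in\mathcal X$, and $\min\{c_1x+c_2y: x\in\mathcal X,u\in\mathcal U(x),y\ge 0, B_2y\ge d-B_1x-Eu\}$ is finite. *)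

From HB Require Import structures.
From mathcomp Require Import all_boot all_order all_algebra.
From mathcomp Require Import all_classical all_reals ereal.
Set Implicit Arguments. Unset Strict Implicit. Unset Printing Implicit Defensive.
Import Order.TTheory GRing.Theory Num.Theory.
Local Open Scope ring_scope.
Local Open Scope classical_set_scope.

Definition vle {R : realDomainType} {k : nat} (a b : 'cV[R]_k) : Prop :=
  forall i : 'I_k, a i 0 <= b i 0.

Definition dotv {R : realDomainType} {k : nat} (v w : 'cV[R]_k) : R := (v^T *m w) 0 0.

(* X = { x in Z_+^mx x R_+^nx : A x >= b } ; x is a column of size mx+nx,
   its first mx coordinates are the integer ones *)
Definition inX {R : realType} (mx nx p : nat) (A : 'M[R]_(p, mx + nx)) (b : 'cV[R]_p)
  (x : 'cV[R]_(mx + nx)) : Prop :=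
  (forall i : 'I_mx, x (lshift nx i) 0 \is a Num.int) /\ vle 0 x /\ vle b (A *m x).

Definition inU {R : realType} (n nu k : nat) (F : 'cV[R]_n -> 'M[R]_(k, nu))
  (h : 'cV[R]_k) (G : 'M[R]_(k, n)) (x : 'cV[R]_n) (u : 'cV[R]_nu) : Prop :=
  vle 0 u /\ vle (F x *m u) (h + G *m x).

Definition inOU {R : realType} (n nu k m : nat) (F : 'cV[R]_n -> 'M[R]_(k, nu))
  (h : 'cV[R]_k) (G : 'M[R]_(k, n)) (E : 'M[R]_(m, nu)) (x : 'cV[R]_n)
  (beta : 'cV[R]_m) (u : 'cV[R]_nu) : Prop :=
  inU F h G x u /\
  forall u' : 'cV[R]_nu, inU F h G x u' -> dotv (- (E *m u')) beta <= dotv (- (E *m u)) beta.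

Definition inPi {R : realType} (m ny : nat) (B2 : 'M[R]_(m, ny)) (c2 : 'rV[R]_ny)
  (pi : 'cV[R]_m) : Prop :=
  vle 0 pi /\ vle (B2^T *m pi) c2^T.

Definition extreme_point_Pi {R : realType} (m ny : nat) (B2 : 'M[R]_(m, ny))
  (c2 : 'rV[R]_ny) (pi : 'cV[R]_m) : Prop :=
  inPi B2 c2 pi /\
  forall (p1 p2 : 'cV[R]_m) (t : R), inPi B2 c2 p1 -> inPi B2 c2 p2 ->
    0 < t -> t < 1 -> pi = t *: p1 + (1 - t) *: p2 -> p1 = p2.

Definition inrecPi {R : realType} (m ny : nat) (B2 : 'M[R]_(m, ny)) (g : 'cV[R]_m) : Prop :=
  vle 0 g /\ vle (B2^T *m g) 0.

(* (representative vectors of) extreme rays of Pi *)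
Definition extreme_ray_Pi {R : realType} (m ny : nat) (B2 : 'M[R]_(m, ny))
  (g : 'cV[R]_m) : Prop :=
  g != 0 /\ inrecPi B2 g /\
  forall g1 g2 : 'cV[R]_m, inrecPi B2 g1 -> inrecPi B2 g2 -> g = g1 + g2 ->
    exists a1 a2 : R, [/\ 0 <= a1, 0 <= a2, g1 = a1 *: g & g2 = a2 *: g].

(* optimal value of MP1 (infimum; +oo if infeasible) *)
Definition MP1_value {R : realType} (mx nx p nu k m : nat)
  (A : 'M[R]_(p, mx + nx)) (b : 'cV[R]_p) (c1 : 'rV[R]_(mx + nx))
  (B1 : 'M[R]_(m, mx + nx)) (E : 'M[R]_(m, nu)) (d : 'cV[R]_m)
  (F : 'cV[R]_(mx + nx) -> 'M[R]_(k, nu)) (h : 'cV[R]_k) (G : 'M[R]_(k, mx + nx))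
  (Phat Rhat : set 'cV[R]_m) : \bar R :=
  ereal_inf [set z | exists (x : 'cV[R]_(mx + nx)) (eta : R)
      (u v : 'cV[R]_m -> 'cV[R]_nu),
    [/\ inX A b x,
        (forall pi, Phat pi ->
           dotv pi d - dotv pi (B1 *m x) - dotv pi (E *m u pi) <= eta
           /\ inOU F h G E x pi (u pi)),
        (forall g, Rhat g ->
           dotv g d - dotv g (B1 *m x) - dotv g (E *m v g) <= 0
           /\ inOU F h G E x g (v g))
      & z = ((c1 *m x) 0 0 + eta)%:E]].

(* optimal value of MP2 (infimum; +oo if infeasible) *)
Definition MP2_value {R : realType} (mx nx p nu k m ny : nat)
  (A : 'M[R]_(p, mx + nx)) (b : 'cV[R]_p) (c1 : 'rV[R]_(mx + nx)) (c2 : 'rV[R]_ny)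
  (B1 : 'M[R]_(m, mx + nx)) (B2 : 'M[R]_(m, ny)) (E : 'M[R]_(m, nu)) (d : 'cV[R]_m)
  (F : 'cV[R]_(mx + nx) -> 'M[R]_(k, nu)) (h : 'cV[R]_k) (G : 'M[R]_(k, mx + nx))
  (Phat Rhat : set 'cV[R]_m) : \bar R :=
  ereal_inf [set z | exists (x : 'cV[R]_(mx + nx)) (eta : R)
      (u v : 'cV[R]_m -> 'cV[R]_nu) (yp yg : 'cV[R]_m -> 'cV[R]_ny),
    [/\ inX A b x,
        (forall pi, Phat pi ->
           [/\ (c2 *m yp pi) 0 0 <= eta,
               vle (d - B1 *m x - E *m u pi) (B2 *m yp pi),
               vle 0 (yp pi) & inOU F h G E x pi (u pi)]),
        (forall g, Rhat g ->
           [/\ vle (d - B1 *m x - E *m v g) (B2 *m yg g),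
               vle 0 (yg g) & inOU F h G E x g (v g)])
      & z = ((c1 *m x) 0 0 + eta)%:E]].

Definition orig_value {R : realType} (mx nx p nu k m ny : nat)
  (A : 'M[R]_(p, mx + nx)) (b : 'cV[R]_p) (c1 : 'rV[R]_(mx + nx)) (c2 : 'rV[R]_ny)
  (B1 : 'M[R]_(m, mx + nx)) (B2 : 'M[R]_(m, ny)) (E : 'M[R]_(m, nu)) (d : 'cV[R]_m)
  (F : 'cV[R]_(mx + nx) -> 'M[R]_(k, nu)) (h : 'cV[R]_k) (G : 'M[R]_(k, mx + nx))
  : \bar R :=
  ereal_inf [set z | exists (x : 'cV[R]_(mx + nx)) (u : 'cV[R]_nu) (y : 'cV[R]_ny),
    [/\ inX A b x, inU F h G x u, vle 0 y, vle (d - B1 *m x - E *m u) (B2 *m y)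
      & z = ((c1 *m x) 0 0 + (c2 *m y) 0 0)%:E]].

From HB Require Import structures.
From mathcomp Require Import all_boot all_order all_algebra.
From mathcomp Require Import all_classical all_reals ereal.
Set Implicit Arguments.
Unset Strict Implicit.
Unset Printing Implicit Defensive.

Import Order.TTheory GRing.Theory Num.Theory.
Local Open Scope ring_scope.
Local Open Scope classical_set_scope.

(* Every feasible point of MP2 is feasible for MP1 with the same objective
   value.  This is LP weak duality for the second stage: if y >= 0 and
   B2 y >= r, then pi^T r <= pi^T B2 y <= c2 y for every pi in Pi, and
   g^T r <= g^T B2 y <= 0 for every g in the recession cone of Pi.  Only
   membership of the selected points and rays in Pi, resp. its recession
   cone, is used. *)

Section ScalarProduct.
Variables (R : realDomainType) (n : nat).
Implicit Types v w a c : 'cV[R]_n.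

Lemma dotvE v w : dotv v w = \sum_i v i 0 * w i 0.
Proof. by rewrite /dotv mxE; apply: eq_bigr => i _; rewrite mxE. Qed.

Lemma dotvBr w a c : dotv w (a - c) = dotv w a - dotv w c.
Proof. by rewrite /dotv mulmxBr !mxE. Qed.

Lemma ler_dotv2l w a c : vle 0 w -> vle a c -> dotv w a <= dotv w c.
Proof.
move=> w_ge0 le_ac; rewrite !dotvE; apply: ler_sum => i _.
by apply: ler_wpM2l; [have := w_ge0 i; rewrite mxE | exact: le_ac].
Qed.

Lemma dotv_mulmx (m : nat) (p : 'cV[R]_m) (B : 'M[R]_(m, n)) v :
  dotv p (B *m v) = dotv v (B^T *m p).
Proof.
rewrite /dotv; have -> : v^T *m (B^T *m p) = (p^T *m (B *m v))^T.
  by rewrite !trmx_mul trmxK mulmxA.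
by rewrite [RHS]mxE.
Qed.

End ScalarProduct.

Section WeakDuality.
Variables (R : realType) (m ny : nat) (B2 : 'M[R]_(m, ny)).
Variables (r : 'cV[R]_m) (y : 'cV[R]_ny).
Hypotheses (y_ge0 : vle 0 y) (B2y_ge : vle r (B2 *m y)).

Lemma inPi_dotv_le (c2 : 'rV[R]_ny) pi :
  inPi B2 c2 pi -> dotv pi r <= (c2 *m y) 0 0.
Proof.
case=> pi_ge0 B2pi_le; apply: le_trans (ler_dotv2l pi_ge0 B2y_ge) _.
rewrite dotv_mulmx; apply: le_trans (ler_dotv2l y_ge0 B2pi_le) _.
by rewrite /dotv -trmx_mul mxE.
Qed.

Lemma inrecPi_dotv_le0 g : inrecPi B2 g -> dotv g r <= 0.
Proof.
case=> g_ge0 B2g_le0; apply: le_trans (ler_dotv2l g_ge0 B2y_ge) _.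
rewrite dotv_mulmx; apply: le_trans (ler_dotv2l y_ge0 B2g_le0) _.
by rewrite /dotv mulmx0 mxE.
Qed.

End WeakDuality.

Theorem proposition10 (R : realType) (mx nx p nu k m ny : nat)
  (A : 'M[R]_(p, mx + nx)) (b : 'cV[R]_p) (c1 : 'rV[R]_(mx + nx)) (c2 : 'rV[R]_ny)
  (B1 : 'M[R]_(m, mx + nx)) (B2 : 'M[R]_(m, ny)) (E : 'M[R]_(m, nu)) (d : 'cV[R]_m)
  (F : 'cV[R]_(mx + nx) -> 'M[R]_(k, nu)) (h : 'cV[R]_k) (G : 'M[R]_(k, mx + nx))
  (Phat Rhat : set 'cV[R]_m)
  (HUne : forall x, inX A b x -> exists u, inU F h G x u)
  (HUbd : forall x, inX A b x -> exists M : R,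
            forall u, inU F h G x u -> forall i, `|u i 0| <= M)
  (Hfin : exists r : R, orig_value A b c1 c2 B1 B2 E d F h G = r%:E)
  (HP : Phat `<=` extreme_point_Pi B2 c2)
  (HR : Rhat `<=` extreme_ray_Pi B2) :
  (MP1_value A b c1 B1 E d F h G Phat Rhat
     <= MP2_value A b c1 c2 B1 B2 E d F h G Phat Rhat)%E.
Proof.
apply: ereal_inf_le_tmp => z [x [eta [u [v [yp [yg [Xx MP2_P MP2_R ->]]]]]]].
exists x, eta, u, v; split => //.
- move=> pi Ppi; have [le_eta B2y_ge y_ge0 OUu] := MP2_P pi Ppi.
  split => //; rewrite -!dotvBr; apply: le_trans le_eta.
  by apply: (inPi_dotv_le y_ge0 B2y_ge); case: (HP pi Ppi).
- move=> g Rg; have [B2y_ge y_ge0 OUv] := MP2_R g Rg.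
  split => //; rewrite -!dotvBr.
  by apply: (inrecPi_dotv_le0 y_ge0 B2y_ge); case: (HR g Rg) => _ [].
Qed.
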